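(* Let $\Phi=\varphi\land\bigwedge RE\land\bigwedge DI$ be an $\mathcal{ALCQIO}_{b,Re}$-formula over $\tau$. There exists an $\mathcal{ALCQIO}_b$-formula $\mathit{semi}(\Phi)$ over $\tau$ such that for every (finite) $\tau$-structure $\mathcal{M}$: $\mathcal{M}\models\mathit{semi}(\Phi)$ iff $\mathcal{M}$ is $\Phi$-semi-connected.
   Context: Structures are finite; $\tau$ has atomic concepts, atomic roles (a subset $\mathsf{N_F}$ functional, interpreted as partial functions) and nominals. $\mathcal{ALCQIO}_b$: concepts built from atomic concepts and nominals using $\sqcap,\sqcup,\neg,\exists r.C,\exists^{\le n}r.C$ for roles atomic or inverse; formulae are Boolean combinations of inclusions $C\sqsubseteq D$ and equalities $C\equiv D$; standard semantics. A reachability assertion $\mathit{Reach}(B,S,A)$ has atomic concepts $A,B$ and $S\subseteq\mathsf{N_F}$; $\mathit{Disj}(A_1,A_2)$ is $A_1\sqcap A_2\equiv\bot$. An $\mathcal{ALCQIO}_{b,Re}$-formula is $\Phi=\varphi\land\bigwedge RE\land\bigwedge DI$ with $\varphi\in\mathcal{ALCQIO}_b$, $RE$ a finite set of reachability assertions, $DI$ a finite set of disjointness assertions, compatible (for every two assertions $\mathit{Reach}(B_1,S_1,A_1),\mathit{Reach}(B_2,S_2,A_2)\in RE$ with $S_1\cap S_2\ne\emptyset$, $\mathit{Disj}(A_1,A_2)\in DI$). $\mathit{assoc}(\Phi)=\varphi\land\bigwedge_{\mathit{Reach}(B,S,A)\in RE}(B\sqsubseteq A)\land\bigwedge DI$.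 For $\mathit{Reach}(B,S,A)\in RE$, $D$ denotes the directed graph on vertex set $A^{\mathcal{M}}$ with edges $\bigcup_{s\in S}s^{\mathcal{M}}\cap(A^{\mathcal{M}}\times A^{\mathcal{M}})$. $\mathcal{M}$ is $\Phi$-semi-connected if $\mathcal{M}\models\mathit{assoc}(\Phi)$ and for every $\mathit{Reach}(B,S,A)\in RE$ and $u\in A^{\mathcal{M}}$, $u$ is reachable in the corresponding graph from $B^{\mathcal{M}}$ or from a directed cycle of that graph. *)

From mathcomp Require Import all_boot.
Set Implicit Arguments. Unset Strict Implicit. Unset Printing Implicit Defensive.

Section Syntax.
(* The signature tau: atomic concepts CN, atomic roles RN, nominals IN. *)
Variables (CN RN IN : finType).

Inductive role := RAtom of RN | RInv of RN.

Inductive concept :=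
| CTop
| CAtom of CN
| CNom of IN
| CNot of concept
| CAnd of concept & concept
| COr of concept & concept
| CEx of role & concept
| CAtMost of nat & role & concept.

Inductive formula :=
| FIncl of concept & concept
| FEquiv of concept & concept
| FNeg of formula
| FConj of formula & formula
| FDisj of formula & formula.

(* Reach(B,S,A) is represented as ((B, S), A) *)
Definition reach := (CN * {set RN} * CN)%type.
Definition disj := (CN * CN)%type.
End Syntax.

Record structure (CN RN IN : finType) (D : finType) := Structure {
  cI : CN -> pred D;
  rI : RN -> rel D;
  oI : IN -> D }.

Section Semantics.
Variables (CN RN IN : finType) (D : finType) (M : structure CN RN IN D).

Definition is_tau_structure (NF : {set RN}) : Prop :=
  forall r, r \in NF -> forall x y z, rI M r x y -> rI M r x z -> y = z.

Definition rext (r : role RN) : rel D :=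
  match r with
  | RAtom s => rI M s
  | RInv s => fun x y => rI M s y x
  end.

Fixpoint cext (C : concept CN RN IN) : pred D :=
  match C with
  | CTop => fun _ => true
  | CAtom A => cI M A
  | CNom o => fun x => x == oI M o
  | CNot C1 => fun x => ~~ cext C1 x
  | CAnd C1 C2 => fun x => cext C1 x && cext C2 x
  | COr C1 C2 => fun x => cext C1 x || cext C2 x
  | CEx r C1 => fun x => [exists y, rext r x y && cext C1 y]
  | CAtMost n r C1 => fun x => #|[pred y | rext r x y && cext C1 y]| <= n
  end.

Fixpoint sat (f : formula CN RN IN) : Prop :=
  match f with
  | FIncl C1 C2 => forall x, cext C1 x -> cext C2 x
  | FEquiv C1 C2 => forall x, cext C1 x = cext C2 x
  | FNeg g => ~ sat g
  | FConj g h => sat g /\ sat h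
  | FDisj g h => sat g \/ sat h
  end.

Definition sat_disj (d : disj CN) : Prop := forall x, ~~ (cI M d.1 x && cI M d.2 x).

Definition sat_assoc (phi : formula CN RN IN) (RE : seq (reach CN RN))
    (DI : seq (disj CN)) : Prop :=
  sat phi /\ (forall R, R \in RE -> forall x, cI M R.1.1 x -> cI M R.2 x)
  /\ (forall d, d \in DI -> sat_disj d).

Definition reach_edge (R : reach CN RN) : rel D :=
  fun x y => [&& cI M R.2 x, cI M R.2 y & [exists s in R.1.2, rI M s x y]].

Definition on_cycle (e : rel D) (v : D) : bool := [exists w, e v w && connect e w v].

Definition semi_connected (phi : formula CN RN IN) (RE : seq (reach CN RN))
    (DI : seq (disj CN)) : Prop :=
  sat_assoc phi RE DI /\
  forall R, R \in RE -> forall u, cI M R.2 u ->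
    (exists b, cI M R.1.1 b /\ connect (reach_edge R) b u) \/
    (exists v, on_cycle (reach_edge R) v /\ connect (reach_edge R) v u).
End Semantics.

Definition reach_funct (CN RN : finType) (NF : {set RN}) (RE : seq (reach CN RN)) :=
  forall R, R \in RE -> R.1.2 \subset NF.

Definition compatible (CN RN : finType) (RE : seq (reach CN RN)) (DI : seq (disj CN)) :=
  forall R1 R2, R1 \in RE -> R2 \in RE -> R1 != R2 ->
    R1.1.2 :&: R2.1.2 != set0 ->
    ((R1.2, R2.2) \in DI) || ((R2.2, R1.2) \in DI).

(* In a finite graph, a vertex is reachable from a source set B or from a
   directed cycle exactly when every vertex outside B has a predecessor:
   walking backwards along predecessors from a vertex outside B either meets B
   or, by finiteness, must revisit a vertex and thus runs into a cycle.  For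
   Reach(B,S,A) the predecessor condition is the concept inclusion
   A ⊑ B ⊔ ⊔_{s∈S} ∃s⁻.A, so semi(Φ) is φ together with assoc(Φ) and these
   inclusions. *)

From mathcomp Require Import all_boot.

Set Implicit Arguments.
Unset Strict Implicit.
Unset Printing Implicit Defensive.

Section FiniteGraph.
Variables (D : finType) (e : rel D).

Lemma pred_closed_set_has_cycle (X : {set D}) :
  X != set0 -> {in X, forall x, exists2 y, y \in X & e y x} ->
  exists2 v, v \in X & on_cycle e v.
Proof.
have [n] := ubnP #|X|; elim: n X => // n IH X /ltnSE hcard /set0Pn[x hx] hpred.
have [y hy eyx] := hpred x hx.
have [cxy | ncxy] := boolP (connect e x y).
  by exists y => //; apply/existsP; exists x; rewrite eyx.
pose Y := [set z in X | connect e z y].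
have ltYX : #|Y| < #|X|.
  apply: proper_card; apply/properP; split; first by apply/subsetP=> z /setIdP[].
  by exists x => //; rewrite inE (negbTE ncxy) andbF.
have [v /setIdP[hv _] cv] : exists2 v, v \in Y & on_cycle e v.
  apply: IH (leq_trans ltYX hcard) _ _.
  - by apply/set0Pn; exists y; rewrite inE hy connect0.
  - move=> z /setIdP[hz czy]; have [w hw ewz] := hpred z hz.
    by exists w => //; rewrite inE hw (connect_trans (connect1 ewz) czy).
by exists v.
Qed.

Definition reached_from_source_or_cycle (B : pred D) (u : D) : Prop :=
  (exists b, B b /\ connect e b u) \/ (exists v, on_cycle e v /\ connect e v u).

Lemma connect_last_edge x u : connect e x u -> x = u \/ exists y, e y u.
Proof.
move=> /connectP[p + ->]; elim/last_ind: p => [|p z _]; first by left.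
by rewrite rcons_path last_rcons => /andP[_ ezy]; right; exists (last x p).
Qed.

Lemma reached_source_or_has_pred B u :
  reached_from_source_or_cycle B u -> B u \/ exists y, e y u.
Proof.
case=> [[b [Bb /connect_last_edge[<-|]]] | [v [/existsP[w /andP[evw cwv]]]]].
- by left.
- by right.
- case/connect_last_edge => [<-|]; last by right.
  by case/connect_last_edge: cwv => [<-|]; [right; exists v | right].
Qed.

Lemma reached_from_source_or_cycleP (P B : pred D) :
  (forall x y, e x y -> P x) ->
  (forall u, P u -> reached_from_source_or_cycle B u) <->
  (forall x, P x -> B x \/ exists y, e y x).
Proof.
move=> edge_src; split=> [reached x Px | hpred u Pu].
  exact: reached_source_or_has_pred (reached x Px).
pose X := [set x | P x && connect e x u].
have [/existsP[b /andP[/setIdP[_ cbu] Bb]] | noB] := boolP [exists x in X, B x].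
  by left; exists b.
right.
have [v /setIdP[_ cvu] cv] : exists2 v, v \in X & on_cycle e v.
  apply: pred_closed_set_has_cycle.
  - by apply/set0Pn; exists u; rewrite inE Pu connect0.
  - move=> x /setIdP[Px cxu].
    have [Bx|[y eyx]] := hpred x Px.
      by case/negP: noB; apply/existsP; exists x; rewrite inE Px cxu Bx.
    by exists y => //; rewrite inE (edge_src _ _ eyx) (connect_trans (connect1 eyx) cxu).
by exists v.
Qed.

End FiniteGraph.

Section SemiConnectedFormula.
Variables (CN RN IN : finType).

Notation concept := (concept CN RN IN).
Notation formula := (formula CN RN IN).

Definition cbot : concept := CNot (CTop _ _ _).

Definition ftrue : formula := FIncl (CTop _ _ _) (CTop _ _ _).

Definition fconj_all (T : Type) (f : T -> formula) (s : seq T) : formula :=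
  foldr (fun x acc => FConj (f x) acc) ftrue s.

Definition ex_inv_in (S : {set RN}) (C : concept) : concept :=
  foldr (fun s acc => COr (CEx (RInv s) C) acc) cbot (enum S).

Definition assoc_formula (R : reach CN RN) : formula :=
  FIncl (CAtom _ _ R.1.1) (CAtom _ _ R.2).

Definition disj_formula (d : disj CN) : formula :=
  FEquiv (CAnd (CAtom _ _ d.1) (CAtom _ _ d.2)) cbot.

Definition has_pred_formula (R : reach CN RN) : formula :=
  FIncl (CAtom _ _ R.2) (COr (CAtom _ _ R.1.1) (ex_inv_in R.1.2 (CAtom _ _ R.2))).

Definition semi (phi : formula) (RE : seq (reach CN RN)) (DI : seq (disj CN)) :=
  FConj phi (FConj (fconj_all assoc_formula RE)
    (FConj (fconj_all disj_formula DI) (fconj_all has_pred_formula RE))).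

Variables (D : finType) (M : structure CN RN IN D).

Lemma sat_fconj_all (T : eqType) (f : T -> formula) (s : seq T) :
  sat M (fconj_all f s) <-> (forall x, x \in s -> sat M (f x)).
Proof.
elim: s => [|a s IH] /=; first by split.
split=> [[fa /IH fs] x|fas].
  by rewrite inE => /predU1P[->|/fs].
by split=> [|]; [apply: fas; rewrite inE eqxx | apply/IH=> x xs; apply: fas; rewrite inE xs orbT].
Qed.

Lemma cext_ex_inv_in S C x :
  cext M (ex_inv_in S C) x = [exists s in S, exists y, rI M s y x && cext M C y].
Proof.
transitivity (has (fun s => [exists y, rI M s y x && cext M C y]) (enum S)).
  by rewrite /ex_inv_in; elim: (enum S) => //= s l ->.
apply/hasP/existsP => [[s Ss hs] | [s /andP[Ss hs]]].
  by exists s; rewrite -mem_enum Ss.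
by exists s; rewrite ?mem_enum.
Qed.

Lemma sat_disj_formula d : sat M (disj_formula d) <-> sat_disj M d.
Proof. by split=> h x; [move: (h x) => /= -> | move: (h x) => /=; case: (_ && _)]. Qed.

Lemma sat_has_pred_formula R :
  sat M (has_pred_formula R) <->
  (forall x, cI M R.2 x -> cI M R.1.1 x \/ exists y, reach_edge M R y x).
Proof.
split=> h x Ax.
  move: (h x Ax); rewrite /= cext_ex_inv_in => /orP[|/existsP[s /andP[Ss]]].
    by left.
  case/existsP=> y /andP[rsyx Ay]; right; exists y.
  by apply/and3P; split=> //; apply/existsP; exists s; rewrite Ss.
rewrite /= cext_ex_inv_in; case: (h x Ax) => [->//|[y /and3P[Ay _]]].
case/existsP=> s /andP[Ss rsyx]; apply/orP; right.
by apply/existsP; exists s; rewrite Ss; apply/existsP; exists y; rewrite rsyx.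
Qed.

Lemma sat_semi phi RE DI :
  sat M (semi phi RE DI) <->
  sat_assoc M phi RE DI /\
  forall R, R \in RE -> forall x, cI M R.2 x ->
    cI M R.1.1 x \/ exists y, reach_edge M R y x.
Proof.
split=> [[phiM [/sat_fconj_all assocM [/sat_fconj_all disjM /sat_fconj_all predM]]]
        | [[phiM [assocM disjM]] predM]].
  split; last by move=> R /predM/sat_has_pred_formula.
  by split; last split; [| | move=> d /disjM/sat_disj_formula].
split=> //; split; first exact/sat_fconj_all.
split; apply/sat_fconj_all.
  by move=> d /disjM/sat_disj_formula.
by move=> R /predM/sat_has_pred_formula.
Qed.

End SemiConnectedFormula.

Theorem lemma8 (CN RN IN : finType) (NF : {set RN})
    (phi : formula CN RN IN) (RE : seq (reach CN RN)) (DI : seq (disj CN)) :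
  reach_funct NF RE -> compatible RE DI ->
  exists semi : formula CN RN IN,
    forall (D : finType) (M : structure CN RN IN D),
      is_tau_structure M NF ->
      (sat M semi <-> semi_connected M phi RE DI).
Proof.
move=> _ _; exists (semi phi RE DI) => D M _.
have edge_src R x y : reach_edge M R x y -> cI M R.2 x by case/and3P.
split=> [/sat_semi[assocM hR] | [assocM hR]]; last apply/sat_semi; split=> // R RE_R.
  exact: (reached_from_source_or_cycleP _ (edge_src R)).2 (hR R RE_R).
exact: (reached_from_source_or_cycleP _ (edge_src R)).1 (hR R RE_R).
Qed.
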